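(* $W^+$ is a normal subgroup of $G$, and the cosets of $W^+$ in $G$ are $W^+$, $\tau_xW^+$, $\tau_yW^+$, $\tau_zW^+$, $\varrho W^+$, $\varrho^2W^+$. The quotient $G/W^+$ is isomorphic to the symmetric group $S_3$.
   Context: $\mathbb F$ is a field of characteristic zero, $\mathfrak{sl}_2$ the Lie algebra of $2\times2$ trace-zero matrices over $\mathbb F$ with trace form $(u,v)=\mathrm{tr}(uv)$. Equitable basis: $x=\begin{pmatrix}1&0\\0&-1\end{pmatrix}$, $y=\begin{pmatrix}-1&2\\0&1\end{pmatrix}$, $z=\begin{pmatrix}-1&0\\-2&1\end{pmatrix}$. Let $x^*=\begin{pmatrix}1&-1\\1&-1\end{pmatrix}$, $y^*=\begin{pmatrix}0&0\\1&0\end{pmatrix}$, $z^*=\begin{pmatrix}0&-1\\0&0\end{pmatrix}$, and $\sigma_x=\exp(\mathrm{ad}\,x^* )$, $\sigma_y=\exp(\mathrm{ad}\,y^* )$, $\sigma_z=\exp(\mathrm{ad}\,z^* )$. $G=\langle\sigma_x,\sigma_y,\sigma_z\rangle\subseteq\mathrm{Aut}_{\mathbb F}(\mathfrak{sl}_2)$. $\varrho$ is the automorphism of $\mathfrak{sl}_2$ with $\varrho(x)=y,\varrho(y)=z,\varrho(z)=x$ (it equals $\sigma_x\sigma_y$). $\tau_x=\sigma_y\sigma_z\sigma_y$, $\tau_y=\sigma_z\sigma_x\sigma_z$, $\tau_z=\sigma_x\sigma_y\sigma_x$. For $u\in\{x,y,z\}$, $r_u(v)=v-(u,v)u$; $W=\langle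 r_x,r_y,r_z\rangle$, and $W^+$ is the subgroup of elements of $W$ of even length with respect to the generators $r_x,r_y,r_z$. *)

From HB Require Import structures.
From mathcomp Require Import all_boot all_order all_algebra all_fingroup.
Set Implicit Arguments. Unset Strict Implicit. Unset Printing Implicit Defensive.
Import GRing.Theory.
Local Open Scope ring_scope.

Section Defs.
Variable F : fieldType.

Definition mx2 (a b c d : F) : 'M[F]_2 :=
  \matrix_(i < 2, j < 2)
     if (i : nat) == 0%N then (if (j : nat) == 0%N then a else b)
     else (if (j : nat) == 0%N then c else d).

Definition ex : 'M[F]_2 := mx2 1 0 0 (-1).
Definition ey : 'M[F]_2 := mx2 (-1) 2 0 1.
Definition ez : 'M[F]_2 := mx2 (-1) 0 (-2) 1.
Definition xs : 'M[F]_2 := mx2 1 (-1) 1 (-1).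
Definition ys : 'M[F]_2 := mx2 0 0 1 0.
Definition zs : 'M[F]_2 := mx2 0 (-1) 0 0.

Definition in_sl2 (v : 'M[F]_2) : Prop := \tr v = 0.
Definition trform (u v : 'M[F]_2) : F := \tr (u *m v).

Definition ad (a v : 'M[F]_2) : 'M[F]_2 := a *m v - v *m a.

(* exp(ad a) for nilpotent a : (ad a)^3 = 0, so the exponential series
   is the finite sum  sum_{n<3} (ad a)^n / n! *)
Definition expad (a : 'M[F]_2) (v : 'M[F]_2) : 'M[F]_2 :=
  \sum_(n < 3) ((n`!)%:R)^-1 *: iter n (ad a) v.

Definition sigma_x := expad xs.
Definition sigma_y := expad ys.
Definition sigma_z := expad zs.

(* equality of automorphisms of sl_2 : agreement on sl_2 *)
Definition eqsl (f g : 'M[F]_2 -> 'M[F]_2) : Prop :=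
  forall v, in_sl2 v -> f v = g v.

(* generators of G and of W, indexed by 'I_3 : 0 ~ x, 1 ~ y, 2 ~ z *)
Definition star (i : 'I_3) : 'M[F]_2 :=
  if (i : nat) == 0%N then xs else if (i : nat) == 1%N then ys else zs.
Definition equi (i : 'I_3) : 'M[F]_2 :=
  if (i : nat) == 0%N then ex else if (i : nat) == 1%N then ey else ez.

(* a letter (i, true) is sigma_i, (i, false) is sigma_i^{-1} = exp(ad(-i^star)) *)
Definition gletter (l : 'I_3 * bool) : 'M[F]_2 -> 'M[F]_2 :=
  if l.2 then expad (star l.1) else expad (- star l.1).
Definition gword (w : seq ('I_3 * bool)) : 'M[F]_2 -> 'M[F]_2 :=
  foldr (fun l acc => gletter l \o acc) id w.
Definition inG (f : 'M[F]_2 -> 'M[F]_2) : Prop :=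
  exists w, eqsl f (gword w).

Definition refl (u v : 'M[F]_2) : 'M[F]_2 := v - trform u v *: u.
Definition wword (w : seq 'I_3) : 'M[F]_2 -> 'M[F]_2 :=
  foldr (fun i acc => refl (equi i) \o acc) id w.
(* W = < r_x, r_y, r_z > (the r_u are involutions) *)
Definition inW (f : 'M[F]_2 -> 'M[F]_2) : Prop :=
  exists w, eqsl f (wword w).
Definition inWp (f : 'M[F]_2 -> 'M[F]_2) : Prop :=
  exists w, ~~ odd (size w) /\ eqsl f (wword w).

Definition rho := sigma_x \o sigma_y.
Definition tau_x := sigma_y \o sigma_z \o sigma_y.
Definition tau_y := sigma_z \o sigma_x \o sigma_z.
Definition tau_z := sigma_x \o sigma_y \o sigma_x.

Definition coset_rep (i : 'I_6) : 'M[F]_2 -> 'M[F]_2 :=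
  nth id [:: id; tau_x; tau_y; tau_z; rho; rho \o rho] i.

End Defs.

From Stdlib Require Import ClassicalEpsilon.
From HB Require Import structures.
From mathcomp Require Import all_boot all_order all_algebra all_fingroup.
From mathcomp Require Import ring.
Set Implicit Arguments. Unset Strict Implicit. Unset Printing Implicit Defensive.
Import GRing.Theory.
Local Open Scope ring_scope.

(* All maps involved (sigma_u^{+-1} and the reflections r_u) are linear on
   sl_2 and have integer matrices in the equitable basis (x, y, z); as
   char F = 0, a map of sl_2 has at most one such matrix.  The proof thus
   reduces everything to finitely many identities between explicit integer
   3x3 matrices, checked by computation:
   - a product r_a r_b of two reflections is a word in the sigma's
     (W^+ <= G);
   - a letter sigma_u^{+-1} conjugates each r_v into a word of odd length in
     the reflections (W^+ is normal in G);
   - a letter times a coset representative is a coset representative times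
     an element of W^+ (G is the union of the six cosets).
   Reducing matrices modulo 2, every reflection becomes the identity and the
   six coset representatives become the six 3x3 permutation matrices; this
   separates the cosets and gives the homomorphism G -> S_3 with kernel W^+. *)

Definition o0 : 'I_3 := @Ordinal 3 0 isT.
Definition o1 : 'I_3 := @Ordinal 3 1 isT.
Definition o2 : 'I_3 := @Ordinal 3 2 isT.

Lemma ord3_cases (i : 'I_3) : [\/ i = o0, i = o1 | i = o2].
Proof.
case: i => [[|[|[|i]]] Hi] //; [apply: Or31 | apply: Or32 | apply: Or33];
  exact: val_inj.
Qed.

Lemma sum3 (V : nmodType) (f : 'I_3 -> V) : \sum_(k < 3) f k = f o0 + f o1 + f o2.
Proof.
rewrite !big_ord_recr big_ord0 /= add0r.
by congr (f _ + f _ + f _); apply: val_inj.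
Qed.

(* 3x3 matrices as records of entries (row-major), so that products of
   explicit matrices reduce by computation. *)
Record mx3 (T : Type) := Mx3 {
  e00 : T; e01 : T; e02 : T; e10 : T; e11 : T; e12 : T; e20 : T; e21 : T; e22 : T }.

Definition get (T : Type) (A : mx3 T) (i j : 'I_3) : T :=
  match (i : nat), (j : nat) with
  | 0, 0 => e00 A | 0, 1 => e01 A | 0, _ => e02 A
  | 1, 0 => e10 A | 1, 1 => e11 A | 1, _ => e12 A
  | _, 0 => e20 A | _, 1 => e21 A | _, _ => e22 A end.

Lemma mx3P (T : Type) (A B : mx3 T) : (forall i j, get A i j = get B i j) -> A = B.
Proof.
case: A B => ? ? ? ? ? ? ? ? ? [? ? ? ? ? ? ? ? ?] e.
by congr Mx3; [exact: (e o0 o0) | exact: (e o0 o1) | exact: (e o0 o2)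
  | exact: (e o1 o0) | exact: (e o1 o1) | exact: (e o1 o2)
  | exact: (e o2 o0) | exact: (e o2 o1) | exact: (e o2 o2)].
Qed.

Definition mx3_of (T : Type) (f : 'I_3 -> 'I_3 -> T) : mx3 T :=
  Mx3 (f o0 o0) (f o0 o1) (f o0 o2) (f o1 o0) (f o1 o1) (f o1 o2) (f o2 o0) (f o2 o1) (f o2 o2).

Lemma get_mx3_of (T : Type) (f : 'I_3 -> 'I_3 -> T) i j : get (mx3_of f) i j = f i j.
Proof. by case: (ord3_cases i) => ->; case: (ord3_cases j) => ->. Qed.

Definition mul3 (A B : mx3 int) : mx3 int :=
  mx3_of (fun i k => get A i o0 * get B o0 k + get A i o1 * get B o1 k + get A i o2 * get B o2 k).

Definition id3 : mx3 int := Mx3 1 0 0 0 1 0 0 0 1.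

Lemma get_mul3 (A B : mx3 int) i k : get (mul3 A B) i k = \sum_(j < 3) get A i j * get B j k.
Proof. by rewrite get_mx3_of sum3. Qed.

Lemma mul3A (A B C : mx3 int) : mul3 A (mul3 B C) = mul3 (mul3 A B) C.
Proof.
case: A B C => ? ? ? ? ? ? ? ? ? [? ? ? ? ? ? ? ? ?] [? ? ? ? ? ? ? ? ?].
by rewrite /mul3 /mx3_of /get /=; congr Mx3; ring.
Qed.

Lemma mul1_3 (A : mx3 int) : mul3 id3 A = A.
Proof. by case: A => ? ? ? ? ? ? ? ? ?; rewrite /mul3 /mx3_of /get /=; congr Mx3; ring. Qed.

Lemma mul3_1 (A : mx3 int) : mul3 A id3 = A.
Proof. by case: A => ? ? ? ? ? ? ? ? ?; rewrite /mul3 /mx3_of /get /=; congr Mx3; ring. Qed.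

(* Matrix of sigma_i (letter (i, true)) and of sigma_i^-1 (letter (i, false))
   in the equitable basis; column j is the image of the j-th basis vector. *)
Definition letter_mx (l : 'I_3 * bool) : mx3 int :=
  match (l.1 : nat), l.2 with
  | 0, true => Mx3 1 0 0 2 2 (-1) 0 1 0
  | 0, false => Mx3 1 0 0 0 0 1 2 (-1) 2
  | 1, true => Mx3 0 0 1 0 1 0 (-1) 2 2
  | 1, false => Mx3 2 2 (-1) 0 1 0 1 0 0
  | _, true => Mx3 2 (-1) 2 1 0 0 0 0 1
  | _, false => Mx3 0 1 0 (-1) 2 2 0 0 1
  end.

Definition refl_mx (i : 'I_3) : mx3 int :=
  match (i : nat) with
  | 0 => Mx3 (-1) 2 2 0 1 0 0 0 1
  | 1 => Mx3 1 0 0 2 (-1) 2 0 0 1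
  | _ => Mx3 1 0 0 0 1 0 2 2 (-1)
  end.

Definition gword_mx (w : seq ('I_3 * bool)) : mx3 int :=
  foldr (fun l A => mul3 (letter_mx l) A) id3 w.
Definition wword_mx (w : seq 'I_3) : mx3 int :=
  foldr (fun i A => mul3 (refl_mx i) A) id3 w.

Lemma gword_mx_cat u v : gword_mx (u ++ v) = mul3 (gword_mx u) (gword_mx v).
Proof. by elim: u => [|l u IH] /=; rewrite ?mul1_3 // IH mul3A. Qed.

Lemma wword_mx_cat u v : wword_mx (u ++ v) = mul3 (wword_mx u) (wword_mx v).
Proof. by elim: u => [|i u IH] /=; rewrite ?mul1_3 // IH mul3A. Qed.

Lemma even_ind (T : Type) (P : seq T -> Prop) : P [::] ->
  (forall a b w, P w -> P [:: a, b & w]) -> forall w, ~~ odd (size w) -> P w.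
Proof.
move=> P0 P2 w.
suff: (~~ odd (size w) -> P w) /\ (forall a, ~~ odd (size (a :: w)) -> P (a :: w)) by case.
elim: w => [|b w [IHw IHbw]]; split=> //.
- by move=> hw; apply: IHbw.
- by move=> a /=; rewrite negbK => /IHw; apply: P2.
Qed.

Definition refl_pair_word (a b : 'I_3) : seq ('I_3 * bool) :=
  match (a : nat), (b : nat) with
  | 0, 1 => [:: (o2, true); (o2, true)]
  | 0, 2 => [:: (o1, false); (o1, false)]
  | 1, 0 => [:: (o2, false); (o2, false)]
  | 1, 2 => [:: (o0, true); (o0, true)]
  | 2, 0 => [:: (o1, true); (o1, true)]
  | 2, 1 => [:: (o0, false); (o0, false)]
  | _, _ => [::]
  end.

Lemma refl_pair_wordE a b : wword_mx [:: a; b] = gword_mx (refl_pair_word a b).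
Proof. by case: (ord3_cases a) => ->; case: (ord3_cases b) => ->; vm_compute. Qed.

Lemma Wplus_mx_in_G w : ~~ odd (size w) -> exists gw, wword_mx w = gword_mx gw.
Proof.
move: w; apply: even_ind; first by exists [::].
move=> a b w [gw hw]; exists (refl_pair_word a b ++ gw).
by rewrite gword_mx_cat -refl_pair_wordE -hw -wword_mx_cat.
Qed.

Definition conj_word (l : 'I_3 * bool) (u : 'I_3) : seq 'I_3 :=
  match (l.1 : nat), l.2, (u : nat) with
  | 0, true, 0 => [:: o1; o0; o1]
  | 0, true, 1 => [:: o1; o2; o1]
  | 0, true, _ => [:: o1]
  | 0, false, 0 => [:: o2; o0; o2]
  | 0, false, 1 => [:: o2]
  | 0, false, _ => [:: o2; o1; o2]
  | 1, true, 0 => [:: o2]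
  | 1, true, 1 => [:: o2; o1; o2]
  | 1, true, _ => [:: o2; o0; o2]
  | 1, false, 0 => [:: o0; o2; o0]
  | 1, false, 1 => [:: o0; o1; o0]
  | 1, false, _ => [:: o0]
  | _, true, 0 => [:: o0; o1; o0]
  | _, true, 1 => [:: o0]
  | _, true, _ => [:: o0; o2; o0]
  | _, false, 0 => [:: o1]
  | _, false, 1 => [:: o1; o0; o1]
  | _, false, _ => [:: o1; o2; o1]
  end.

Lemma conj_wordE l u : odd (size (conj_word l u)) /\
  mul3 (letter_mx l) (refl_mx u) = mul3 (wword_mx (conj_word l u)) (letter_mx l).
Proof.
case: l => a b; case: (ord3_cases a) => ->; case: b;
  case: (ord3_cases u) => ->; vm_compute; split => //.
Qed.

Lemma conj_letter_wword l w : exists w', odd (size w') = odd (size w) /\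
  mul3 (letter_mx l) (wword_mx w) = mul3 (wword_mx w') (letter_mx l).
Proof.
elim: w => [|u w [w' [odd_w' conj_w]]]; first by exists [::]; rewrite mul1_3 mul3_1.
have [odd_u conj_u] := conj_wordE l u.
exists (conj_word l u ++ w'); split; first by rewrite size_cat oddD odd_u odd_w'.
by rewrite mul3A conj_u -mul3A conj_w mul3A wword_mx_cat.
Qed.

Lemma conj_gword_wword gw w : exists w', odd (size w') = odd (size w) /\
  mul3 (gword_mx gw) (wword_mx w) = mul3 (wword_mx w') (gword_mx gw).
Proof.
elim: gw w => [|l gw IH] w; first by exists w; rewrite mul1_3 mul3_1.
have [w1 [odd_w1 conj_w1]] := IH w.
have [w2 [odd_w2 conj_w2]] := conj_letter_wword l w1.
exists w2; split; first by rewrite odd_w2 odd_w1.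
by rewrite -mul3A conj_w1 !mul3A conj_w2.
Qed.

Definition coset_word (k : nat) : seq ('I_3 * bool) :=
  match k with
  | 0 => [::]
  | 1 => [:: (o1, true); (o2, true); (o1, true)]
  | 2 => [:: (o2, true); (o0, true); (o2, true)]
  | 3 => [:: (o0, true); (o1, true); (o0, true)]
  | 4 => [:: (o0, true); (o1, true)]
  | _ => [:: (o0, true); (o1, true); (o0, true); (o1, true)]
  end.

Definition coset_table (l : 'I_3 * bool) (k : nat) : nat * seq 'I_3 :=
  match (l.1 : nat), l.2, k with
  | 0, true, 0 => (1%N, [:: o0; o2])
  | 0, true, 1 => (0%N, [:: o1; o0])
  | 0, true, 2 => (4%N, [:: o0; o1])
  | 0, true, 3 => (5%N, [:: ])
  | 0, true, 4 => (2%N, [:: ])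
  | 0, true, _ => (3%N, [:: o2; o0])
  | 0, false, 0 => (1%N, [:: o0; o1])
  | 0, false, 1 => (0%N, [:: o2; o0])
  | 0, false, 2 => (4%N, [:: ])
  | 0, false, 3 => (5%N, [:: o0; o2])
  | 0, false, 4 => (2%N, [:: o1; o0])
  | 0, false, _ => (3%N, [:: ])
  | 1, true, 0 => (2%N, [:: o1; o0])
  | 1, true, 1 => (5%N, [:: ])
  | 1, true, 2 => (0%N, [:: o2; o1])
  | 1, true, 3 => (4%N, [:: o1; o2])
  | 1, true, 4 => (3%N, [:: ])
  | 1, true, _ => (1%N, [:: o0; o1])
  | 1, false, 0 => (2%N, [:: o1; o2])
  | 1, false, 1 => (5%N, [:: o1; o0])
  | 1, false, 2 => (0%N, [:: o0; o1])
  | 1, false, 3 => (4%N, [:: ])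
  | 1, false, 4 => (3%N, [:: o2; o1])
  | 1, false, _ => (1%N, [:: ])
  | _, true, 0 => (3%N, [:: o2; o1])
  | _, true, 1 => (4%N, [:: o2; o0])
  | _, true, 2 => (5%N, [:: ])
  | _, true, 3 => (0%N, [:: o0; o2])
  | _, true, 4 => (1%N, [:: ])
  | _, true, _ => (2%N, [:: o1; o2])
  | _, false, 0 => (3%N, [:: o2; o0])
  | _, false, 1 => (4%N, [:: ])
  | _, false, 2 => (5%N, [:: o2; o1])
  | _, false, 3 => (0%N, [:: o1; o2])
  | _, false, 4 => (1%N, [:: o0; o2])
  | _, false, _ => (2%N, [:: ])
  end.

Lemma coset_tableE l (i : 'I_6) :
  [/\ ((coset_table l i).1 < 6)%N, ~~ odd (size (coset_table l i).2) &
   mul3 (letter_mx l) (gword_mx (coset_word i))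
   = mul3 (gword_mx (coset_word (coset_table l i).1)) (wword_mx (coset_table l i).2)].
Proof.
case: l => a b; case: (ord3_cases a) => ->; case: b;
  case: i => [[|[|[|[|[|[|i]]]]]] Hi] //; vm_compute; split => //.
Qed.

Definition in_coset (A : mx3 int) (i : 'I_6) : Prop :=
  exists w, ~~ odd (size w) /\ A = mul3 (gword_mx (coset_word i)) (wword_mx w).

Lemma coset_word_in_coset (i : 'I_6) : in_coset (gword_mx (coset_word i)) i.
Proof. by exists [::]; rewrite mul3_1. Qed.

Lemma gword_in_coset gw : exists i, in_coset (gword_mx gw) i.
Proof.
elim: gw => [|l gw [i [w [even_w eq_gw]]]].
  by exists ord0, [::]; rewrite mul1_3.
have [lt6 even_v step] := coset_tableE l i.
exists (Ordinal lt6), ((coset_table l i).2 ++ w); split.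
  by rewrite size_cat oddD negb_add (negbTE even_w) (negbTE even_v).
by rewrite /= eq_gw mul3A step -mul3A wword_mx_cat.
Qed.

Definition parity (n : int) : bool := (n%:~R : 'Z_2) == 1.

Lemma parityD m n : parity (m + n) = parity m (+) parity n.
Proof.
rewrite /parity intrD; move: (m%:~R : 'Z_2) (n%:~R : 'Z_2) => a b.
by case: a => [[|[|a]] Ha] //; case: b => [[|[|b]] Hb].
Qed.

Lemma parityM m n : parity (m * n) = parity m && parity n.
Proof.
rewrite /parity intrM; move: (m%:~R : 'Z_2) (n%:~R : 'Z_2) => a b.
by case: a => [[|[|a]] Ha] //; case: b => [[|[|b]] Hb].
Qed.

Definition mul3b (P Q : mx3 bool) : mx3 bool :=
  mx3_of (fun i k => (get P i o0 && get Q o0 k) (+) (get P i o1 && get Q o1 k)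
                     (+) (get P i o2 && get Q o2 k)).

Definition mod2 (A : mx3 int) : mx3 bool := mx3_of (fun i j => parity (get A i j)).

Lemma mod2_mul A B : mod2 (mul3 A B) = mul3b (mod2 A) (mod2 B).
Proof.
by apply: mx3P => i j; rewrite !get_mx3_of !parityD !parityM.
Qed.

(* Every reflection is the identity modulo 2, hence so is every element of W. *)
Lemma mod2_wword w : mod2 (wword_mx w) = mod2 id3.
Proof.
elim: w => [|u w IH] //; rewrite [wword_mx _]/= mod2_mul IH.
by case: (ord3_cases u) => ->; vm_compute.
Qed.

Definition coset_mod2 (i : 'I_6) : mx3 bool := mod2 (gword_mx (coset_word i)).

Lemma in_coset_mod2 A i : in_coset A i -> mod2 A = coset_mod2 i.
Proof.
move=> [w [_ ->]]; rewrite mod2_mul mod2_wword.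
by case: i => [[|[|[|[|[|[|i]]]]]] Hi] //; vm_compute.
Qed.

Definition rowperm (P : mx3 bool) (t : 'I_3) : 'I_3 :=
  if get P t o0 then o0 else if get P t o1 then o1 else o2.

Lemma rowperm_coset_inj i : injective (rowperm (coset_mod2 i)).
Proof.
move=> s t /eqP; case: (ord3_cases s) => ->; case: (ord3_cases t) => -> //;
  by case: i => [[|[|[|[|[|[|i]]]]]] Hi] //; vm_compute.
Qed.

Lemma rowperm_coset_mul i j t : rowperm (mul3b (coset_mod2 i) (coset_mod2 j)) t
  = rowperm (coset_mod2 j) (rowperm (coset_mod2 i) t).
Proof.
apply/eqP; case: (ord3_cases t) => ->;
  by case: i => [[|[|[|[|[|[|i]]]]]] Hi] //; case: j => [[|[|[|[|[|[|j]]]]]] Hj] //; vm_compute.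
Qed.

Lemma rowperm_coset0 t : rowperm (coset_mod2 ord0) t = t.
Proof. by apply/eqP; case: (ord3_cases t) => ->; vm_compute. Qed.

Lemma rowperm_coset_sep i j : rowperm (coset_mod2 i) =1 rowperm (coset_mod2 j) -> i = j.
Proof.
move=> e; apply: val_inj; move: (e o0) (e o1) => /eqP + /eqP {e}.
by case: i => [[|[|[|[|[|[|i]]]]]] Hi] //; case: j => [[|[|[|[|[|[|j]]]]]] Hj] //; vm_compute.
Qed.

Lemma in_coset_uniq A i j : in_coset A i -> in_coset A j -> i = j.
Proof.
move=> /in_coset_mod2 Ai /in_coset_mod2 Aj.
by apply: rowperm_coset_sep => t; rewrite -Ai -Aj.
Qed.

Definition coset_perm (i : 'I_6) : 'S_3 := perm (@rowperm_coset_inj i).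

Lemma coset_perm_inj : injective coset_perm.
Proof.
move=> i j e; apply: rowperm_coset_sep => t.
by have := congr1 (fun s : 'S_3 => s t) e; rewrite /= !permE.
Qed.

Lemma coset_perm_onto (s : 'S_3) : exists i, coset_perm i = s.
Proof.
have card_le : (#|{perm 'I_3}| <= #|'I_6|)%N by rewrite card_Sn card_ord.
by have /codomP[i ->] := inj_card_onto coset_perm_inj card_le s; exists i.
Qed.

Lemma coset_perm0 : coset_perm ord0 = 1%g.
Proof. by apply/permP => t; rewrite permE perm1 rowperm_coset0. Qed.

Lemma coset_perm_mul i j k : coset_mod2 k = mul3b (coset_mod2 i) (coset_mod2 j) ->
  coset_perm k = (coset_perm i * coset_perm j)%g.
Proof. by move=> e; apply/permP => t; rewrite permM !permE e rowperm_coset_mul. Qed.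

Lemma ord2_cases (i : 'I_2) : i = ord0 \/ i = ord_max.
Proof. by case: i => [[|[|i]] Hi]; [left | right |]; try apply: val_inj. Qed.

Lemma sum2 (V : nmodType) (f : 'I_2 -> V) : \sum_(k < 2) f k = f ord0 + f ord_max.
Proof.
rewrite !big_ord_recr big_ord0 /= add0r.
by congr (f _ + f _); apply: val_inj.
Qed.

(* Integer 2x2 matrices [[a, b], [c, d]]: the generators sigma_u and the
   reflections r_u are evaluated on the basis of sl_2 by computing with
   these and then injecting into 'M[F]_2. *)
Record imx2 := IMx2 { m00 : int; m01 : int; m10 : int; m11 : int }.

Definition imx2_mul (P Q : imx2) : imx2 :=
  IMx2 (m00 P * m00 Q + m01 P * m10 Q) (m00 P * m01 Q + m01 P * m11 Q)
       (m10 P * m00 Q + m11 P * m10 Q) (m10 P * m01 Q + m11 P * m11 Q).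
Definition imx2_add (P Q : imx2) : imx2 :=
  IMx2 (m00 P + m00 Q) (m01 P + m01 Q) (m10 P + m10 Q) (m11 P + m11 Q).
Definition imx2_opp (P : imx2) : imx2 := IMx2 (- m00 P) (- m01 P) (- m10 P) (- m11 P).
Definition imx2_scale (k : int) (P : imx2) : imx2 :=
  IMx2 (k * m00 P) (k * m01 P) (k * m10 P) (k * m11 P).

Definition equi_imx (i : 'I_3) : imx2 :=
  match (i : nat) with 0 => IMx2 1 0 0 (-1) | 1 => IMx2 (-1) 2 0 1 | _ => IMx2 (-1) 0 (-2) 1 end.
Definition star_imx (i : 'I_3) : imx2 :=
  match (i : nat) with 0 => IMx2 1 (-1) 1 (-1) | 1 => IMx2 0 0 1 0 | _ => IMx2 0 (-1) 0 0 end.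
Definition letter_imx (l : 'I_3 * bool) : imx2 :=
  if l.2 then star_imx l.1 else imx2_opp (star_imx l.1).
Definition col_imx (A : mx3 int) (j : 'I_3) : imx2 :=
  imx2_add (imx2_add (imx2_scale (get A o0 j) (equi_imx o0))
    (imx2_scale (get A o1 j) (equi_imx o1))) (imx2_scale (get A o2 j) (equi_imx o2)).

Section Sl2.
Variable F : fieldType.
Hypothesis charF0 : [pchar F] =i pred0.

Lemma intr_inj : injective (fun n : int => n%:~R : F).
Proof.
move=> m n /= /eqP; rewrite -subr_eq0 -intrB => /eqP e; apply/eqP; rewrite -subr_eq0.
move: e; case: (m - n) => k; move/pcharf0P: charF0 => natf0.
- by move/eqP; rewrite natf0.
- by rewrite NegzE intrN => /eqP; rewrite oppr_eq0 natf0.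
Qed.

Lemma two_neq0 : (2 : F) != 0.
Proof. by move/pcharf0P: charF0 => ->. Qed.

Lemma mx2P (A B : 'M[F]_2) :
  A ord0 ord0 = B ord0 ord0 -> A ord0 ord_max = B ord0 ord_max ->
  A ord_max ord0 = B ord_max ord0 -> A ord_max ord_max = B ord_max ord_max -> A = B.
Proof.
move=> e00 e01 e10 e11; apply/matrixP => i j.
by case: (ord2_cases i) => ->; case: (ord2_cases j) => ->.
Qed.

(* (x^*, y^*, z^* ) is, up to the factor 2, the basis of sl_2 dual to the
   equitable basis (x, y, z) for the trace form: coordinates are linear forms. *)
Definition coord (v : 'M[F]_2) (j : 'I_3) : F := trform (star F j) v / 2.

Lemma coordD u v j : coord (u + v) j = coord u j + coord v j.
Proof. by rewrite /coord /trform mulmxDr mxtraceD mulrDl. Qed.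

Lemma coordZ (k : F) v j : coord (k *: v) j = k * coord v j.
Proof. by rewrite /coord /trform -scalemxAr mxtraceZ mulrA. Qed.

Lemma coord_sum (I : Type) (r : seq I) (P : pred I) (f : I -> 'M[F]_2) j :
  coord (\sum_(i <- r | P i) f i) j = \sum_(i <- r | P i) coord (f i) j.
Proof.
have coord0 : coord 0 j = 0 by rewrite -(scale0r 0) coordZ mul0r.
exact: (big_morph (coord^~ j) (fun u v => coordD u v j) coord0).
Qed.

Lemma coord_equi i j : coord (equi F i) j = (i == j)%:R.
Proof.
rewrite /coord /trform /mxtrace sum2 !mxE !sum2.
by case: (ord3_cases i) => ->; case: (ord3_cases j) => ->;
  rewrite /star /equi /= !mxE /=; field; exact: two_neq0.
Qed.

Lemma tr_equi i : \tr (equi F i) = 0.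
Proof.
rewrite /mxtrace sum2; case: (ord3_cases i) => ->; rewrite /equi /= !mxE /=; ring.
Qed.

Lemma sl2_decomp v : in_sl2 v -> v = \sum_(j < 3) coord v j *: equi F j.
Proof.
rewrite /in_sl2 /mxtrace sum2 => /eqP; rewrite addr_eq0 => /eqP v11.
rewrite sum3; apply: mx2P;
  rewrite /coord /trform /mxtrace !sum2 !mxE !sum2 /star /equi /= !mxE /= ?v11;
  field; exact: two_neq0.
Qed.

Definition mx_col (A : mx3 int) (j : 'I_3) : 'M[F]_2 :=
  \sum_(i < 3) (get A i j)%:~R *: equi F i.
Definition mx_map (A : mx3 int) (v : 'M[F]_2) : 'M[F]_2 :=
  \sum_(j < 3) coord v j *: mx_col A j.

Lemma coord_mx_col A i j : coord (mx_col A j) i = (get A i j)%:~R.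
Proof.
rewrite /mx_col coord_sum; under eq_bigr do rewrite coordZ coord_equi.
by rewrite sum3; case: (ord3_cases i) => -> /=; rewrite ?mulr0 ?mulr1 ?addr0 ?add0r.
Qed.

Lemma coord_mx_map A v i : coord (mx_map A v) i = \sum_(j < 3) coord v j * (get A i j)%:~R.
Proof. by rewrite /mx_map coord_sum; apply: eq_bigr => j _; rewrite coordZ coord_mx_col. Qed.

Lemma mx_map_sl2 A v : in_sl2 (mx_map A v).
Proof.
have trS := big_morph _ (@mxtraceD F 2) (mxtrace0 F 2).
rewrite /in_sl2 /mx_map trS big1 // => j _.
rewrite mxtraceZ /mx_col trS big1 ?mulr0 // => i _.
by rewrite mxtraceZ tr_equi mulr0.
Qed.

Lemma mx_map_mul A B v : mx_map A (mx_map B v) = mx_map (mul3 A B) v.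
Proof.
rewrite (sl2_decomp (mx_map_sl2 (mul3 A B) v)) (sl2_decomp (mx_map_sl2 A _)).
apply: eq_bigr => i _; congr (_ *: _).
rewrite !coord_mx_map; under eq_bigr do rewrite coord_mx_map mulr_suml.
rewrite exchange_big /=; apply: eq_bigr => k _.
rewrite get_mul3 rmorph_sum mulr_sumr; apply: eq_bigr => j _.
by rewrite rmorphM /= -mulrA (mulrC (get B j k)%:~R).
Qed.

Lemma coord_mx_map_equi A i j : coord (mx_map A (equi F j)) i = (get A i j)%:~R.
Proof.
rewrite coord_mx_map sum3 !coord_equi.
by case: (ord3_cases j) => -> /=; rewrite ?mul0r ?mul1r ?addr0 ?add0r.
Qed.

Definition rep (f : 'M[F]_2 -> 'M[F]_2) (A : mx3 int) : Prop := eqsl f (mx_map A).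

Lemma rep_comp f g A B : rep f A -> rep g B -> rep (f \o g) (mul3 A B).
Proof. by move=> fA gB v sl2v /=; rewrite gB // fA ?mx_map_mul //; apply: mx_map_sl2. Qed.

Lemma rep_eq f g A : rep f A -> rep g A -> eqsl f g.
Proof. by move=> fA gA v sl2v; rewrite fA // gA. Qed.

Lemma rep_eqsl f g A : eqsl f g -> rep g A -> rep f A.
Proof. by move=> fg gA v sl2v; rewrite fg // gA. Qed.

Lemma rep_inj f A B : rep f A -> rep f B -> A = B.
Proof.
move=> fA fB; apply: mx3P => i j; apply: intr_inj => /=.
have sl2_ej : in_sl2 (equi F j) by exact: tr_equi.
by rewrite -!coord_mx_map_equi -fA // -fB.
Qed.

Lemma rep_of_linear (f : 'M[F]_2 -> 'M[F]_2) A :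
  (forall u v, f (u + v) = f u + f v) -> (forall (k : F) v, f (k *: v) = k *: f v) ->
  (forall j, f (equi F j) = mx_col A j) -> rep f A.
Proof.
move=> fD fZ f_equi v sl2v.
have f0 : f 0 = 0 by have := fZ 0 0; rewrite !scale0r.
rewrite {1}(sl2_decomp sl2v) (big_morph f fD f0) /mx_map.
by apply: eq_bigr => j _; rewrite fZ f_equi.
Qed.

Lemma expad_sqr0 (a v : 'M[F]_2) :
  a *m a = 0 -> expad a v = v + (a *m v - v *m a) - a *m v *m a.
Proof.
move=> a2; rewrite /expad !big_ord_recr big_ord0 /= add0r /ad.
have -> : a *m (a *m v - v *m a) - (a *m v - v *m a) *m a = - (2 *: (a *m v *m a)).
  rewrite mulmxBr mulmxBl !mulmxA -(mulmxA v) a2 mul0mx mulmx0 sub0r subr0.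
  by rewrite scaler_nat mulr2n opprD.
by rewrite invr1 !scale1r scalerN scalerA mulVf ?two_neq0 // scale1r.
Qed.

Lemma expad_sqr0D (a u v : 'M[F]_2) :
  a *m a = 0 -> expad a (u + v) = expad a u + expad a v.
Proof.
move=> a2; rewrite !expad_sqr0 // mulmxDr !mulmxDl !opprD.
by rewrite (addrACA (a *m u)) (addrACA u) (addrACA (u + _)).
Qed.

Lemma expad_sqr0Z (a v : 'M[F]_2) (k : F) :
  a *m a = 0 -> expad a (k *: v) = k *: expad a v.
Proof.
move=> a2; rewrite !expad_sqr0 // scalerBr scalerDr scalerBr.
by rewrite -!scalemxAr -!scalemxAl.
Qed.

Definition imx2F (P : imx2) : 'M[F]_2 :=
  mx2 (m00 P)%:~R (m01 P)%:~R (m10 P)%:~R (m11 P)%:~R.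

Lemma imx2F_mul P Q : imx2F P *m imx2F Q = imx2F (imx2_mul P Q).
Proof. by apply: mx2P; rewrite !mxE !sum2 !mxE /= ?intrD ?intrM. Qed.
Lemma imx2F_add P Q : imx2F P + imx2F Q = imx2F (imx2_add P Q).
Proof. by apply: mx2P; rewrite !mxE /= ?intrD. Qed.
Lemma imx2F_opp P : - imx2F P = imx2F (imx2_opp P).
Proof. by apply: mx2P; rewrite !mxE /= ?intrN. Qed.
Lemma imx2F_scale k P : k%:~R *: imx2F P = imx2F (imx2_scale k P).
Proof. by apply: mx2P; rewrite !mxE /= ?intrM. Qed.
Lemma imx2F_tr P : \tr (imx2F P) = (m00 P + m11 P)%:~R.
Proof. by rewrite /mxtrace sum2 !mxE /= intrD. Qed.
Lemma imx2F0 : imx2F (IMx2 0 0 0 0) = 0.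
Proof. by apply: mx2P; rewrite !mxE. Qed.

Lemma imx2F_equi i : equi F i = imx2F (equi_imx i).
Proof. by case: (ord3_cases i) => ->. Qed.

Lemma imx2F_col A j : mx_col A j = imx2F (col_imx A j).
Proof. by rewrite /mx_col sum3 !imx2F_equi !imx2F_scale !imx2F_add. Qed.

Lemma imx2F_letter l : @gletter F l = expad (imx2F (letter_imx l)).
Proof.
rewrite /gletter /letter_imx.
by case: l.2; case: (ord3_cases l.1) => ->; rewrite -?imx2F_opp.
Qed.

Lemma letter_rep l : rep (@gletter F l) (letter_mx l).
Proof.
have a2 : imx2F (letter_imx l) *m imx2F (letter_imx l) = 0.
  rewrite imx2F_mul -imx2F0; congr imx2F.
  by case: l => i b; case: (ord3_cases i) => ->; case: b; vm_compute.
rewrite imx2F_letter; apply: rep_of_linear => [u v|k v|j]; rewrite ?expad_sqr0D ?expad_sqr0Z //.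
rewrite expad_sqr0 // imx2F_equi imx2F_col !imx2F_mul !imx2F_opp !imx2F_add; congr imx2F.
by case: l a2 => i b _; case: (ord3_cases i) => ->; case: b; case: (ord3_cases j) => ->; vm_compute.
Qed.

Lemma refl_rep i : rep (refl (equi F i)) (refl_mx i).
Proof.
apply: rep_of_linear => [u v|k v|j].
- by rewrite /refl /trform mulmxDr mxtraceD scalerDl opprD addrACA.
- by rewrite /refl /trform -scalemxAr mxtraceZ scalerBr scalerA.
rewrite !imx2F_equi imx2F_col /refl /trform imx2F_mul imx2F_tr imx2F_scale imx2F_opp imx2F_add.
by congr imx2F; case: (ord3_cases i) => ->; case: (ord3_cases j) => ->; vm_compute.
Qed.

Lemma id_rep : rep id id3.
Proof.
apply: rep_of_linear => // j; rewrite imx2F_equi imx2F_col; congr imx2F.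
by case: (ord3_cases j) => ->; vm_compute.
Qed.

Lemma gword_rep w : rep (gword w) (gword_mx w).
Proof. by elim: w => [|l w IH]; [exact: id_rep | exact: rep_comp (letter_rep l) IH]. Qed.

Lemma wword_rep w : rep (wword w) (wword_mx w).
Proof. by elim: w => [|i w IH]; [exact: id_rep | exact: rep_comp (refl_rep i) IH]. Qed.

Lemma coset_rep_rep (i : 'I_6) : rep (@coset_rep F i) (gword_mx (coset_word i)).
Proof.
apply: rep_eqsl (gword_rep _) => v _.
by case: i => [[|[|[|[|[|[|i]]]]]] Hi].
Qed.

Lemma wword_inWp w : ~~ odd (size w) -> inWp (@wword F w).
Proof. by move=> even_w; exists w. Qed.

Lemma inG_rep (g : 'M[F]_2 -> 'M[F]_2) : inG g -> exists gw, rep g (gword_mx gw).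
Proof. by move=> [gw g_gw]; exists gw; apply: rep_eqsl g_gw (gword_rep gw). Qed.

Lemma inWp_rep (f : 'M[F]_2 -> 'M[F]_2) :
  inWp f -> exists2 w, ~~ odd (size w) & rep f (wword_mx w).
Proof. by move=> [w [even_w f_w]]; exists w => //; apply: rep_eqsl f_w (wword_rep w). Qed.

Lemma inG_coset (g : 'M[F]_2 -> 'M[F]_2) : inG g -> exists i A, rep g A /\ in_coset A i.
Proof.
move=> /inG_rep [gw g_gw]; have [i gw_i] := gword_in_coset gw.
by exists i, (gword_mx gw).
Qed.

Lemma Wplus_sub_G (f : 'M[F]_2 -> 'M[F]_2) : inWp f -> inG f.
Proof.
move=> /inWp_rep [w even_w f_w]; have [gw w_gw] := Wplus_mx_in_G even_w.
by exists gw; apply: rep_eq (gword_rep gw); rewrite -w_gw.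
Qed.

Lemma Wplus_normal (g w : 'M[F]_2 -> 'M[F]_2) : inG g -> inWp w ->
  exists w', inWp w' /\ eqsl (g \o w) (w' \o g).
Proof.
move=> /inG_rep [gw g_gw] /inWp_rep [ww even_ww w_ww].
have [ww' [odd_ww' conj]] := conj_gword_wword gw ww.
exists (wword ww'); split; first by apply: wword_inWp; rewrite odd_ww'.
by apply: rep_eq (rep_comp g_gw w_ww) _; rewrite conj; apply: rep_comp (wword_rep _) g_gw.
Qed.

Lemma G_cosets (g : 'M[F]_2 -> 'M[F]_2) : inG g ->
  exists (i : 'I_6) w, inWp w /\ eqsl g (coset_rep i \o w).
Proof.
move=> /inG_coset [i [A [g_A [w [even_w A_w]]]]].
exists i, (wword w); split; first exact: wword_inWp.
by apply: rep_eq g_A _; rewrite A_w; apply: rep_comp (coset_rep_rep i) (wword_rep w).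
Qed.

Lemma cosets_distinct (i j : 'I_6) : i != j ->
  ~ exists w, inWp w /\ eqsl (coset_rep j) (@coset_rep F i \o w).
Proof.
move=> /eqP ij [w [/inWp_rep [ww even_ww w_ww] ji]]; apply: ij.
have ji_mx := rep_inj (coset_rep_rep j) (rep_eqsl ji (rep_comp (coset_rep_rep i) w_ww)).
by apply: in_coset_uniq (coset_word_in_coset j); exists ww.
Qed.

(* The coset of a map (meaningful for the elements of G), and the
   permutation of S_3 attached to it. *)
Definition coset_of (g : 'M[F]_2 -> 'M[F]_2) : 'I_6 :=
  epsilon (inhabits ord0) (fun i => exists A, rep g A /\ in_coset A i).

Definition G_perm (g : 'M[F]_2 -> 'M[F]_2) : 'S_3 := coset_perm (coset_of g).

Lemma coset_ofE g A i : rep g A -> in_coset A i -> coset_of g = i.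
Proof.
move=> g_A A_i.
have [B [g_B B_g]] : exists B, rep g B /\ in_coset B (coset_of g).
  apply: (epsilon_spec (inhabits ord0) (fun i => exists A, rep g A /\ in_coset A i)).
  by exists i, A.
by apply: in_coset_uniq B_g _; rewrite (rep_inj g_B g_A).
Qed.

Lemma G_perm_eqsl (g h : 'M[F]_2 -> 'M[F]_2) : inG g -> eqsl g h -> G_perm g = G_perm h.
Proof.
move=> /inG_coset [i [A [g_A A_i]]] gh.
have h_A : rep h A by apply: rep_eqsl g_A => v sl2v; rewrite gh.
by rewrite /G_perm (coset_ofE g_A A_i) (coset_ofE h_A A_i).
Qed.

(* Reduction mod 2 turns G_perm into a homomorphism. *)
Lemma G_permM (g h : 'M[F]_2 -> 'M[F]_2) :
  inG g -> inG h -> G_perm (g \o h) = (G_perm g * G_perm h)%g.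
Proof.
move=> /inG_rep [gw g_gw] /inG_rep [hw h_hw].
have gh_ghw := rep_comp g_gw h_hw; rewrite -gword_mx_cat in gh_ghw.
have [i g_i] := gword_in_coset gw; have [j h_j] := gword_in_coset hw.
have [k gh_k] := gword_in_coset (gw ++ hw).
rewrite /G_perm (coset_ofE g_gw g_i) (coset_ofE h_hw h_j) (coset_ofE gh_ghw gh_k).
apply: coset_perm_mul.
by rewrite -(in_coset_mod2 gh_k) -(in_coset_mod2 g_i) -(in_coset_mod2 h_j) gword_mx_cat mod2_mul.
Qed.

Lemma G_perm_onto (s : 'S_3) : exists g : 'M[F]_2 -> 'M[F]_2, inG g /\ G_perm g = s.
Proof.
have [i <-] := coset_perm_onto s.
exists (coset_rep i); split.
  by exists (coset_word i); apply: rep_eq (coset_rep_rep i) (gword_rep _).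
by rewrite /G_perm (coset_ofE (coset_rep_rep i) (coset_word_in_coset i)).
Qed.

Lemma G_perm_ker (g : 'M[F]_2 -> 'M[F]_2) : inG g -> (G_perm g = 1%g <-> inWp g).
Proof.
move=> /inG_coset [i [A [g_A A_i]]]; rewrite /G_perm (coset_ofE g_A A_i) -coset_perm0.
split=> [/coset_perm_inj i0 | /inWp_rep [w even_w g_w]].
  move: A_i g_A; rewrite i0 => -[w [even_w ->]]; rewrite mul1_3 => g_w.
  by exists w; split=> //; apply: rep_eq g_w (wword_rep w).
have A_w := rep_inj g_A g_w; congr coset_perm.
by apply: in_coset_uniq A_i _; exists w; rewrite A_w mul1_3.
Qed.
End Sl2.

Unset Implicit Arguments.
Theorem proposition7p6 (F : fieldType) (charF0 : [pchar F] =i pred0) :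
  (* W^+ is contained in G *)
  (forall f, inWp f -> @inG F f) /\
  (* W^+ is normal in G : g W^+ g^{-1} \subset W^+ *)
  (forall g w, inG g -> inWp w ->
     exists w', @inWp F w' /\ eqsl (g \o w) (w' \o g)) /\
  (* every element of G lies in one of the six cosets *)
  (forall g, inG g -> exists (i : 'I_6) w, @inWp F w /\ eqsl g (coset_rep i \o w)) /\
  (* the six cosets are pairwise distinct *)
  (forall i j : 'I_6, i != j ->
     ~ exists w, @inWp F w /\ eqsl (coset_rep j) (coset_rep i \o w)) /\
  (* G / W^+ is isomorphic to S_3 : a surjective homomorphism G -> S_3
     with kernel W^+ *)
  (exists phi : ('M[F]_2 -> 'M[F]_2) -> 'S_3,
     (forall g h, inG g -> inG h -> eqsl g h -> phi g = phi h) /\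
     (forall g h, inG g -> inG h -> phi (g \o h) = (phi g * phi h)%g) /\
     (forall s : 'S_3, exists g, inG g /\ phi g = s) /\
     (forall g, inG g -> (phi g = 1%g <-> inWp g))).
Proof.
split; first exact: (Wplus_sub_G charF0).
split; first exact: (Wplus_normal charF0).
split; first exact: (G_cosets charF0).
split; first exact: (cosets_distinct charF0).
exists (@G_perm F); split; first by move=> g h g_G _; apply: G_perm_eqsl.
split; first exact: (G_permM charF0).
by split; [exact: (G_perm_onto charF0) | exact: (G_perm_ker charF0)].
Qed.
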